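(* Let $a,b,d\in\mathbb C$ with $a\notin\mathbb Z$ and $d\notin\{0,-1,-2,\dots\}$. Then, as an identity of formal power series in $x,y$, $$\mathrm H_3(a,b;d;x,y)=F(a,b;d;x)\,{}_0F_1(1-a;-y)+\sum_{k=1}^\infty\sum_{l=1}^k\frac{(-1)^{k+l}(k-1)!}{(l-1)!\,l!\,(k-l)!}\,\frac{(b)_k}{(1-a)_l(d)_k}\,x^ky^l\,F(a+k,b+k;d+k;x)\,{}_0F_1(1-a+l;-y).$$
   Context: Pochhammer symbol: $(\lambda)_k=\Gamma(\lambda+k)/\Gamma(\lambda)$ for every integer $k$ (possibly negative) whenever defined; $(\lambda)_0=1$. $F(a,b;c;x)=\sum_{k\ge0}\frac{(a)_k(b)_k}{(c)_k k!}x^k$, ${}_0F_1(c;x)=\sum_{k\ge0}\frac{x^k}{(c)_k k!}$. Confluent Horn function $\mathrm H_3(a,b;d;x,y)=\sum_{p,q\ge0}\frac{(a)_{p-q}(b)_p}{(d)_p\,p!\,q!}x^py^q$. All functions are regarded as formal power series in $x,y$; the infinite double sum converges in the formal (degree) topology. *)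

(* Formal power series in x,y over a field are coefficient
   functions nat -> nat -> R (coefficient of x^p y^q). *)
From HB Require Import structures.
From mathcomp Require Import all_boot all_order all_algebra.
Set Implicit Arguments. Unset Strict Implicit. Unset Printing Implicit Defensive.
Import Order.TTheory GRing.Theory Num.Theory.
Local Open Scope ring_scope.

Section Defs.
Variable R : fieldType.

Definition pochn (lam : R) (n : nat) : R := \prod_(i < n) (lam + i%:R).

(* Pochhammer (lambda)_k = Gamma(lambda+k)/Gamma(lambda) for k : int;
   for k = -(n+1): 1 / ((lambda-1)(lambda-2)...(lambda-n-1)) *)
Definition poch (lam : R) (k : int) : R :=
  match k with
  | Posz n => pochn lam n
  | Negz n => (\prod_(i < n.+1) (lam - (i.+1)%:R))^-1
  end.

Definition fps2 := nat -> nat -> R.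

Definition fadd (f g : fps2) : fps2 := fun p q => f p q + g p q.
Definition fscale (c : R) (f : fps2) : fps2 := fun p q => c * f p q.
Definition fmul (f g : fps2) : fps2 :=
  fun p q => \sum_(i < p.+1) \sum_(j < q.+1) f i j * g (p - i)%N (q - j)%N.
Definition fmono (k l : nat) : fps2 :=
  fun p q => if (p == k) && (q == l) then 1 else 0.
Definition xser (f : nat -> R) : fps2 := fun p q => if q == 0%N then f p else 0.
Definition yser (f : nat -> R) : fps2 := fun p q => if p == 0%N then f q else 0.
Definition yser_neg (f : nat -> R) : fps2 := yser (fun q => (-1) ^+ q * f q).

(* A family T : nat -> fps2 is summable in the degree (x-adic) sense used here
   when T k has no monomial x^p y^q with p < k; its sum is then
   coefficientwise the finite sum below. *)
Definition xsummable (T : nat -> fps2) : Prop :=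
  forall k p q, (p < k)%N -> T k p q = 0.
Definition fsum (T : nat -> fps2) : fps2 := fun p q => \sum_(k < p.+1) T k p q.

Definition F21 (a b c : R) : nat -> R :=
  fun k => pochn a k * pochn b k / (pochn c k * k`!%:R).
Definition F01 (c : R) : nat -> R := fun k => (pochn c k * k`!%:R)^-1.

Definition H3 (a b d : R) : fps2 :=
  fun p q => poch a (p%:Z - q%:Z) * pochn b p / (pochn d p * p`!%:R * q`!%:R).

End Defs.

(* Measured against the coefficient of
   F(a,b;d;x) 0F1(1-a;-y), the (k,l)-term contributes
   (-1)^k p(p-1)...(p-k+1) / (a)_k * C(k-1,l-1) C(q,l).  Summing over l by
   Vandermonde gives C(q+k-1,k) = (q)_k / k!, so the double sum is the
   Chu-Vandermonde sum  sum_k (-1)^k C(p,k) (q)_k / (a)_k = (a-q)_p / (a)_p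
   without its k = 0 term; and (a)_(p-q) = (-1)^q (a-q)_p / (1-a)_q turns
   (a-q)_p / (a)_p times the leading coefficient into the coefficient of H3. *)

From HB Require Import structures.
From mathcomp Require Import all_boot all_order all_algebra.
From mathcomp Require Import ring zify.
From Stdlib Require Import FunctionalExtensionality.
Set Implicit Arguments. Unset Strict Implicit. Unset Printing Implicit Defensive.
Import Order.TTheory GRing.Theory Num.Theory.
Local Open Scope ring_scope.

Lemma Vandermonde_shift (m q : nat) :
  (\sum_(1 <= l < m.+2) 'C(m, l.-1) * 'C(q, l) = 'C(q + m, m.+1))%N.
Proof.
rewrite big_add1 /= addnC -binomial.Vandermonde big_ord_recr /= bin_small // mul0n addn0.
rewrite big_mkord (reindex_inj rev_ord_inj) /=; apply: eq_bigr => i _.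
rewrite bin_sub; last by rewrite -ltnS.
by congr (_ * _); congr 'C(_, _); have := ltn_ord i; lia.
Qed.

Section Pochhammer.
Variable R : fieldType.
Implicit Types (x y : R) (m n p q : nat).

Lemma pochn0 x : pochn x 0 = 1.
Proof. by rewrite /pochn big_ord0. Qed.

Lemma pochnD x m n : pochn x (m + n) = pochn x m * pochn (x + m%:R) n.
Proof.
rewrite /pochn big_split_ord /=; congr (_ * _); apply: eq_bigr => i _.
by rewrite natrD addrA.
Qed.

Lemma pochnS x n : pochn x n.+1 = x * pochn (x + 1) n.
Proof. by rewrite -add1n pochnD /pochn big_ord1 addr0. Qed.

Lemma pochnSr x n : pochn x n.+1 = pochn x n * (x + n%:R).
Proof. by rewrite -addn1 pochnD /pochn big_ord1 addr0. Qed.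

Lemma addr_natr_neq0 x : (forall n, x != - n%:R) -> forall i, x + i%:R != 0.
Proof. by move=> hx i; rewrite addr_eq0. Qed.

Section PochnNeq0.
Variable x : R.
Hypothesis hx : forall i, x + i%:R != 0.

Lemma pochn_neq0 n : pochn x n != 0.
Proof. by apply/prodf_neq0 => i _; apply: hx. Qed.

Lemma pochn_shift_neq0 m n : pochn (x + m%:R) n != 0.
Proof. by apply/prodf_neq0 => i _; rewrite -addrA -natrD. Qed.

End PochnNeq0.

Lemma pochn_nat q m : pochn (q%:R : R) m.+1 = ('C(q + m, m.+1) * m.+1`!)%:R.
Proof.
rewrite bin_ffact ffact_prod natr_prod /pochn (reindex_inj rev_ord_inj) /=.
apply: eq_bigr => i _; rewrite -natrD; congr _%:R; have := ltn_ord i; lia.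
Qed.

Lemma pochn_reflect x q : pochn (x - q%:R) q = (-1) ^+ q * pochn (1 - x) q.
Proof.
rewrite -[X in (-1) ^+ X](card_ord q) /pochn -prodrN (reindex_inj rev_ord_inj) /=.
apply: eq_bigr => i _; have hi := ltn_ord i.
rewrite (_ : (q - i.+1)%N = (q - 1 - i)%N); last by lia.
by rewrite !natrB; [ring | lia | lia].
Qed.

Lemma poch_subz_mul x p q : (forall i, 1 - x + i%:R != 0) ->
  poch x (p%:Z - q%:Z) * pochn (x - q%:R) q = pochn (x - q%:R) p.
Proof.
move=> hx; case: (leqP q p) => [le_qp | lt_pq].
  rewrite (_ : p%:Z - q%:Z = Posz (p - q)); last by lia.
  by rewrite /= -{2}(subnKC le_qp) pochnD subrK mulrC.
rewrite (_ : p%:Z - q%:Z = Negz (q - p).-1); last by rewrite NegzE; lia.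
rewrite /= prednK ?subn_gt0 //.
have -> : pochn (x - q%:R) q = pochn (x - q%:R) p * pochn (x - q%:R + p%:R) (q - p).
  by rewrite -pochnD subnKC // ltnW.
have -> : pochn (x - q%:R + p%:R) (q - p) = \prod_(i < q - p) (x - i.+1%:R).
  rewrite /pochn (reindex_inj rev_ord_inj) /=; apply: eq_bigr => i _.
  have hi := ltn_ord i; move: (nat_of_ord i) hi => j hj.
  have : (q - p - j.+1 + p + j.+1 = q)%N by lia.
  by move: (q - p - j.+1)%N => n <-; rewrite !natrD; ring.
rewrite [X in _ * X]mulrC mulKf //; apply/prodf_neq0 => i _.
apply: contraNneq (hx i) => /eqP; rewrite subr_eq0 => /eqP ->.
by rewrite -natr1; apply/eqP; ring.
Qed.

Lemma poch_subzE x p q : (forall i, 1 - x + i%:R != 0) ->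
  poch x (p%:Z - q%:Z) = (-1) ^+ q * pochn (x - q%:R) p / pochn (1 - x) q.
Proof.
move=> hx; rewrite -poch_subz_mul // pochn_reflect !mulrA mulfK ?pochn_neq0 //.
by rewrite mulrAC -expr2 sqrr_sign mul1r.
Qed.

Lemma chu_vandermonde p : forall x y, (forall i, x + i%:R != 0) ->
  \sum_(k < p.+1) (-1) ^+ k * 'C(p, k)%:R * pochn y k / pochn x k
  = pochn (x - y) p / pochn x p.
Proof.
elim: p => [|p IHp] x y hx.
  by rewrite big_ord1 !pochn0 !mulr1 divr1.
have hx1 i : x + 1 + i%:R != 0 by rewrite -addrA (addrC 1) natr1.
have x_neq0 : x != 0 by move: (hx 0%N); rewrite addr0.
have pascal : \sum_(k < p.+2) (-1) ^+ k * 'C(p.+1, k)%:R * pochn y k / pochn x k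
   = \sum_(k < p.+1) (-1) ^+ k * 'C(p, k)%:R * pochn y k / pochn x k
   - y / x * \sum_(k < p.+1) (-1) ^+ k * 'C(p, k)%:R * pochn (y + 1) k / pochn (x + 1) k.
  rewrite big_ord_recl /=.
  have -> : \sum_(i < p.+1) (-1) ^+ (bump 0 i) * 'C(p.+1, bump 0 i)%:R
        * pochn y (bump 0 i) / pochn x (bump 0 i)
      = \sum_(i < p.+1) (-1) ^+ i.+1 * 'C(p, i.+1)%:R * pochn y i.+1 / pochn x i.+1
      - y / x * \sum_(i < p.+1) (-1) ^+ i * 'C(p, i)%:R * pochn (y + 1) i / pochn (x + 1) i.
    rewrite mulr_sumr -sumrB; apply: eq_bigr => i _.
    rewrite /bump /= add1n binS natrD !pochnS exprS.
    by field; rewrite pochn_neq0 ?x_neq0.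
  rewrite addrA; congr (_ - _).
  rewrite big_ord_recr /= (@bin_small p p.+1) // mulr0 !mul0r addr0.
  by rewrite [RHS]big_ord_recl /= !bin0.
rewrite pascal IHp // IHp // (_ : x + 1 - (y + 1) = x - y); last by ring.
rewrite (pochnSr (x - y)) pochnS.
have -> : pochn x p = x * pochn (x + 1) p / (x + p%:R).
  by rewrite -pochnS pochnSr mulfK.
by field; rewrite pochn_neq0 ?hx ?x_neq0.
Qed.

Lemma chu_vandermonde_binomial_sum x p q : (forall i, x + i%:R != 0) ->
  \sum_(k < p.+1) (-1) ^+ k * (p ^_ k)%:R / pochn x k
                 * (\sum_(1 <= l < k.+1) 'C(k.-1, l.-1) * 'C(q, l))%:R
  = pochn (x - q%:R) p / pochn x p - 1.
Proof.
move=> hx; rewrite -chu_vandermonde // big_ord_recl [in RHS]big_ord_recl /=.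
rewrite big_geq // mulr0 add0r bin0 !pochn0 expr0 mul1r divr1 mulr1 addrAC subrr add0r.
apply: eq_bigr => k _; rewrite /bump /= add1n Vandermonde_shift -bin_ffact pochn_nat !natrM.
by rewrite mulrAC [RHS]mulrAC; ring.
Qed.

End Pochhammer.

Section Series.
Variable R : fieldType.
Implicit Types (f g : nat -> R) (h : fps2 R).

Lemma fmul_fmonoE k l h p q :
  fmul (fmono R k l) h p q =
  if (k <= p)%N && (l <= q)%N then h (p - k)%N (q - l)%N else 0.
Proof.
rewrite /fmul /fmono; case: ifP => [/andP [le_kp le_lq] | not_le].
  rewrite (bigD1 (Ordinal (le_kp : (k < p.+1)%N))) //= [X in _ + X]big1 => [|i /eqP ne_ik].
    rewrite addr0 (bigD1 (Ordinal (le_lq : (l < q.+1)%N))) //= [X in _ + X]big1.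
      by rewrite !eqxx mul1r addr0.
    move=> j /eqP ne_jl; rewrite (_ : (j == l :> nat) = false) ?andbF ?mul0r //.
    by apply/negbTE/eqP => e; apply: ne_jl; exact: val_inj.
  apply: big1 => j _; rewrite (_ : (i == k :> nat) = false) ?mul0r //.
  by apply/negbTE/eqP => e; apply: ne_ik; exact: val_inj.
apply: big1 => i _; apply: big1 => j _.
case: ifP => [/andP [/eqP ik /eqP jl] | _]; last by rewrite mul0r.
by move: (ltn_ord i) (ltn_ord j) not_le; rewrite ik jl !ltnS => -> ->.
Qed.

Lemma fmul_yserE h g p q :
  fmul h (yser g) p q = \sum_(j < q.+1) h p j * g (q - j)%N.
Proof.
rewrite /fmul /yser big_ord_recr /= big1 ?add0r => [|i _].
  by apply: eq_bigr => j _; rewrite subnn.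
by apply: big1 => j _; rewrite subn_eq0 leqNgt ltn_ord mulr0.
Qed.

Lemma fmul_fmono_xser_yserE k l f g p q :
  fmul (fmul (fmono R k l) (xser f)) (yser g) p q =
  if (k <= p)%N && (l <= q)%N then f (p - k)%N * g (q - l)%N else 0.
Proof.
rewrite fmul_yserE; under eq_bigr do rewrite fmul_fmonoE /xser.
case: (leqP l q) => [le_lq | lt_ql]; last first.
  rewrite andbF; apply: big1 => j _.
  by case: ifP => [/andP [_ le_lj]|]; rewrite ?mul0r //; move: (ltn_ord j); lia.
rewrite (bigD1 (Ordinal (le_lq : (l < q.+1)%N))) //= leqnn andbT [X in _ + X]big1.
  by rewrite addr0 subnn eqxx; case: ifP; rewrite ?mul0r.
move=> j /eqP ne_jl.
case: ifP => [/andP [_ le_lj]|]; last by rewrite mul0r.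
rewrite subn_eq0 (_ : (j <= l)%N = false) ?mul0r //.
apply/negbTE; rewrite -ltnNge ltn_neqAle le_lj andbT eq_sym.
by apply/eqP => e; apply: ne_jl; exact: val_inj.
Qed.

Lemma fmul_xser_yserE f g p q : fmul (xser f) (yser g) p q = f p * g q.
Proof.
rewrite fmul_yserE big_ord_recl /xser /= subn0 big1 ?addr0 // => j _.
by rewrite mul0r.
Qed.

End Series.

Section Coefficients.
Variables (C : numFieldType) (a b d : C).
Hypotheses (ha : forall i : nat, a + i%:R != 0) (ha' : forall i : nat, 1 - a + i%:R != 0)
           (hd : forall i : nat, d + i%:R != 0).

Definition main_coef p q := F21 a b d p * ((-1) ^+ q * F01 (1 - a) q).

Lemma fact_neq0 n : (n`!%:R : C) != 0.
Proof. by rewrite pnatr_eq0 -lt0n fact_gt0. Qed.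

Lemma H3_coefE p q : H3 a b d p q = main_coef p q * (pochn (a - q%:R) p / pochn a p).
Proof.
rewrite /H3 poch_subzE // /main_coef /F21 /F01.
by field; rewrite ?fact_neq0 ?pochn_neq0.
Qed.

Lemma split_term_coefE p q k l : (1 <= l <= k)%N ->
  ((-1) ^+ (k + l) * (k.-1)`!%:R / ((l.-1)`!%:R * l`!%:R * (k - l)`!%:R)
    * pochn b k / (pochn (1 - a) l * pochn d k))
  * (if (k <= p)%N && (l <= q)%N
     then F21 (a + k%:R) (b + k%:R) (d + k%:R) (p - k)
          * ((-1) ^+ (q - l) * F01 (1 - a + l%:R) (q - l))
     else 0)
  = main_coef p q * ((-1) ^+ k * (p ^_ k)%:R / pochn a k * ('C(k.-1, l.-1) * 'C(q, l))%:R).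
Proof.
case/andP=> l_gt0 le_lk; case: ifP => [/andP [le_kp le_lq] | /negbT]; last first.
  rewrite negb_and -!ltnNge mulr0 => /orP [lt_pk | lt_ql].
    by rewrite ffact_small // !(mul0r, mulr0).
  by rewrite (bin_small lt_ql) muln0 !(mul0r, mulr0).
have split_at m n (x : C) : (m <= n)%N -> pochn x n = pochn x m * pochn (x + m%:R) (n - m).
  by move=> le_mn; rewrite -pochnD subnKC.
have fact_p : p`!%:R = (p ^_ k)%:R * (p - k)`!%:R :> C by rewrite -natrM ffact_fact.
have fact_q : q`!%:R = ('C(q, l) * l`! * (q - l)`!)%:R :> C by rewrite -mulnA bin_fact.
have fact_k : (k.-1)`!%:R = ('C(k.-1, l.-1) * (l.-1)`! * (k - l)`!)%:R :> C.
  by rewrite (_ : (k - l = k.-1 - l.-1)%N) -?mulnA ?bin_fact //; lia.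
have sign_q : (-1) ^+ q = (-1) ^+ l * (-1) ^+ (q - l) :> C by rewrite -exprD subnKC.
rewrite /main_coef /F21 /F01 (split_at k p a) // (split_at k p b) // (split_at k p d) //.
rewrite (split_at l q (1 - a)) // fact_p fact_q fact_k sign_q exprD !natrM.
have ffact_neq0 : (p ^_ k)%:R != 0 :> C by rewrite pnatr_eq0 -lt0n ffact_gt0.
have bin_neq0 : 'C(q, l)%:R != 0 :> C by rewrite pnatr_eq0 -lt0n bin_gt0.
by field; rewrite ?fact_neq0 ffact_neq0 bin_neq0
  ?(pochn_neq0 ha, pochn_neq0 ha', pochn_neq0 hd, pochn_shift_neq0 ha', pochn_shift_neq0 hd).
Qed.

End Coefficients.

Theorem mainTheorem6 (C : numClosedFieldType) (a b d : C)
  (ha : forall n : int, a != n%:~R)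
  (hd : forall n : nat, d != - n%:R) :
  let T : nat -> fps2 C := fun k p q =>
    \sum_(1 <= l < k.+1)
      fscale ((-1) ^+ (k + l) * (k.-1)`!%:R / ((l.-1)`!%:R * l`!%:R * (k - l)`!%:R)
                * pochn b k / (pochn (1 - a) l * pochn d k))
        (fmul (fmul (fmono C k l) (xser (F21 (a + k%:R) (b + k%:R) (d + k%:R))))
              (yser_neg (F01 (1 - a + l%:R)))) p q in
  xsummable T /\
  H3 a b d = fadd (fmul (xser (F21 a b d)) (yser_neg (F01 (1 - a)))) (fsum T).
Proof.
move=> T.
have ha0 : forall i : nat, a + i%:R != 0.
  by apply: addr_natr_neq0 => n; have := ha (- n%:Z); rewrite mulrNz.
have ha1 : forall i : nat, 1 - a + i%:R != 0.
  apply: addr_natr_neq0 => n; apply: contraNneq (ha n.+1) => h; apply/eqP.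
  by rewrite -[a](subKr 1) h opprK pmulrn addrC natr1.
have hd0 := addr_natr_neq0 hd.
split.
  move=> k p q lt_pk; apply: big1 => l _.
  by rewrite /fscale /yser_neg fmul_fmono_xser_yserE leqNgt lt_pk mulr0.
apply: functional_extensionality => p; apply: functional_extensionality => q.
rewrite /fadd /fsum /T /fscale /yser_neg fmul_xser_yserE H3_coefE //.
under eq_bigr => k _ do under eq_big_nat => l /andP [l_gt0 le_lk] do
  rewrite fmul_fmono_xser_yserE split_term_coefE ?l_gt0 //.
under eq_bigr do rewrite -!mulr_sumr -natr_sum.
rewrite -mulr_sumr chu_vandermonde_binomial_sum //.
by rewrite -/(main_coef a b d p q) mulrBr mulr1 addrCA subrr addr0.
Qed.
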